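(* Let $\mathcal{F}$ be a regular family. Define $U_{\mathcal{F}}:\textbf{Tr}(2\times\mathbb{N})\to\textbf{Tr}(2\times\mathbb{N})$ by: $\varnothing\in U_{\mathcal{F}}(T)$, and for $k\geqslant1$, $(\varepsilon_i,n_i)_{i=1}^k\in U_{\mathcal{F}}(T)$ if and only if either $(\varepsilon_i,n_i)_{i=1}^k\in T$ or $\overline{(n_i)_{i=1}^k}\in\mathcal{F}$. Then $U_{\mathcal{F}}$ is continuous, and $U_{\mathcal{F}}(T)\in C$ if and only if $T\in C$.
   Context: A family $\mathcal{F}$ of finite subsets of $\mathbb{N}$ is regular if it is hereditary, spreading (if $(m_i)_{i=1}^k\in\mathcal{F}$ increasing and $n_1<\dots<n_k$, $m_i\leqslant n_i$, then $(n_i)_{i=1}^k\in\mathcal{F}$) and compact in $2^{\mathbb{N}}$; finite sets are identified with their increasing enumerations, so $\mathcal{F}$ is a tree on $\mathbb{N}$. For a set $\Lambda$, $\textbf{Tr}(\Lambda)$ is the set of subsets of $\Lambda^{<\mathbb{N}}$ (finite sequences) closed under initial segments, with the topology inherited from $2^{\Lambda^{<\mathbb{N}}}$ (product topology); $\textbf{Tr}=\textbf{Tr}(\mathbb{N})$; $2=\{0,1\}$. A tree $T$ on $\mathbb{N}$ is ill-founded if there is $(n_i)_{i=1}^\infty$ with $(n_i)_{i=1}^l\in T$ for all $l$, and well-founded otherwise; $\textbf{IF}$ denotes the ill-founded trees. For $T\in\textbf{Tr}(2\times\mathbb{N})$ and $\sigma=(\varepsilon_n)\in2^{\mathbb{N}}$,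 $T(\sigma)=\varnothing$ if $T=\varnothing$, and otherwise $T(\sigma)=\{\varnothing\}\cup\{(n_i)_{i=1}^l:(\varepsilon_i,n_i)_{i=1}^l\in T\}$. $C=\{T\in\textbf{Tr}(2\times\mathbb{N}):T(\sigma)\in\textbf{IF}\text{ for all }\sigma\in2^{\mathbb{N}}\}$. For $v=(n_1,\dots,n_k)$, $\overline{v}=(n_1,n_1+n_2,\dots,n_1+\dots+n_k)$. *)

From HB Require Import structures.
From mathcomp Require Import all_boot all_order all_algebra.
From mathcomp Require Import all_classical all_reals all_analysis.

Set Implicit Arguments.
Unset Strict Implicit.
Unset Printing Implicit Defensive.

Local Open Scope classical_set_scope.

(* Finite sequences on Lambda are [seq Lambda]; a subset of Lambda^{<N} is a
   boolean predicate [seq Lambda -> bool], i.e. a point of 2^{Lambda^{<N}}.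
   The space 2^{Lambda^{<N}} with the product topology is
   [{ptws seq Lambda -> bool}] (bool carries the discrete topology). *)

Definition Tr (L : Type) : set (seq L -> bool) :=
  [set T | forall s t : seq L, T (s ++ t) -> T s].

(* The set 2 = {0,1} is represented by [bool]. *)
Definition seq2N := seq (bool * nat).

Definition IF : set (seq nat -> bool) :=
  [set T | Tr T /\ exists x : nat -> nat, forall l : nat, T (mkseq x l)].

(* T(sigma) for T in Tr(2 x N) and sigma = (eps_n) in 2^N
   (sigma 0 plays the role of eps_1). *)
Definition tree_at (T : seq2N -> bool) (sigma : nat -> bool) : seq nat -> bool :=
  fun s => `[< exists u, T u >] &&
           ((s == [::]) || T (zip (mkseq sigma (size s)) s)).

Definition C : set (seq2N -> bool) :=
  [set T | Tr T /\ forall sigma : nat -> bool, IF (tree_at T sigma)].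

Fixpoint psums_from (acc : nat) (v : seq nat) : seq nat :=
  match v with
  | [::] => [::]
  | n :: v' => (acc + n) :: psums_from (acc + n) v'
  end.
Definition overline (v : seq nat) : seq nat := psums_from 0 v.

(* Families of finite subsets of N, finite sets identified with their
   (strictly) increasing enumerations. *)
Definition regular (F : set (seq nat)) : Prop :=
  (forall s, F s -> sorted ltn s) /\
  (forall s t, F s -> subseq t s -> F t) /\
  (forall m n, F m -> sorted ltn n -> size n = size m ->
     (forall i, (i < size m)%N -> (nth 0 m i <= nth 0 n i)%N) -> F n) /\
  compact [set f : {ptws nat -> bool} | exists2 s, F s & f = (fun k => k \in s)].

Definition U_F (F : set (seq nat)) (T : seq2N -> bool) : seq2N -> bool :=
  fun s => (s == [::]) || T s || `[< F (overline (unzip2 s)) >].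

From HB Require Import structures.
From mathcomp Require Import all_boot all_order all_algebra.
From mathcomp Require Import all_classical all_reals all_analysis.

Local Open Scope classical_set_scope.

(* U_F acts on each coordinate of 2^{(2 x N)^{<N}} separately, which gives
   continuity.  A tree in C stays in C under U_F because U_F only adds nodes;
   conversely, along a branch x of U_F(T)(sigma) the sets overline (x_1..x_l)
   cannot all lie in F: they increase, so by compactness their union would be a
   member of F, hence finite.  Beyond the first l with overline (x_1..x_l) not
   in F, the hereditary property forces every node of the branch into T. *)

Lemma take_mkseq {A : Type} (f : nat -> A) {k l : nat} :
  (k <= l)%N -> take k (mkseq f l) = mkseq f k.
Proof. by move=> kl; rewrite /mkseq -map_take take_iota (minn_idPl kl). Qed.

Lemma take_zip (A B : Type) (a : seq A) (b : seq B) k :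
  take k (zip a b) = zip (take k a) (take k b).
Proof. by elim: a b k => [|x a IH] [|y b] [|k] //=; rewrite IH. Qed.

Lemma size_psums_from acc v : size (psums_from acc v) = size v.
Proof. by elim: v acc => //= n v IH acc; rewrite IH. Qed.

Lemma take_psums_from acc v k :
  take k (psums_from acc v) = psums_from acc (take k v).
Proof. by elim: v acc k => [|n v IH] acc [|k] //=; rewrite IH. Qed.

Lemma size_overline v : size (overline v) = size v.
Proof. exact: size_psums_from. Qed.

Lemma take_overline k v : take k (overline v) = overline (take k v).
Proof. exact: take_psums_from. Qed.

Lemma Tr_take {L : Type} {T : seq L -> bool} k s : Tr T -> T s -> T (take k s).
Proof. by move=> TT Ts; apply: (TT _ (drop k s)); rewrite cat_take_drop. Qed.

Section Branches.

Variables (sigma : nat -> bool) (x : nat -> nat).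

Definition branch (l : nat) : seq2N := mkseq (fun i => (sigma i, x i)) l.

Lemma take_branch {k l : nat} : (k <= l)%N -> take k (branch l) = branch k.
Proof. exact: take_mkseq. Qed.

Lemma unzip2_branch l : unzip2 (branch l) = mkseq x l.
Proof. by rewrite /unzip2 -map_comp. Qed.

Lemma branch_eq0 l : (branch l == [::]) = (l == 0%N).
Proof. by case: l. Qed.

Lemma tree_at_mkseq T l :
  tree_at T sigma (mkseq x l) = `[< exists u, T u >] && ((l == 0%N) || T (branch l)).
Proof. by rewrite /tree_at size_mkseq /mkseq zip_map; case: l. Qed.

End Branches.

Lemma Tr_tree_at T sigma : Tr T -> Tr (tree_at T sigma).
Proof.
move=> TT s t /andP[neT]; rewrite /tree_at neT /=.
case: s => // n s; rewrite !orFb => Tst.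
have := Tr_take (size (n :: s)) _ TT Tst.
by rewrite take_zip take_mkseq ?take_size_cat // size_cat leq_addr.
Qed.

Lemma IF_tree_atP T sigma :
  Tr T -> IF (tree_at T sigma) <-> exists x, forall l, T (branch sigma x l).
Proof.
move=> TT; split=> [[_ [x Tx]]|[x Tx]].
  exists x => l; have := Tx l.+1; rewrite tree_at_mkseq => /andP[_ /= Tl].
  by rewrite -(take_branch _ _ (leqnSn l)); exact: Tr_take _ _ TT Tl.
split; first exact: Tr_tree_at.
exists x => l; rewrite tree_at_mkseq Tx orbT andbT.
by apply/asboolP; exists (branch sigma x 0).
Qed.

Lemma CP T : C T <-> Tr T /\ forall sigma, exists x, forall l, T (branch sigma x l).
Proof. by split=> -[TT IFT]; split=> // sigma; apply/(IF_tree_atP _ _ TT). Qed.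

Lemma cvg_prod_topology (I : Type) (K : I -> topologicalType)
    (F : set_system (prod_topology K)) (f : prod_topology K) :
  Filter F -> (forall i, (fun g => g i) @ F --> f i) -> F --> f.
Proof.
move=> FF Fi; apply/cvg_sup => i A /= [_ [[B oB <-] Bf sBA]].
by apply: filterS sBA _; apply: Fi; apply: open_nbhs_nbhs.
Qed.

Lemma continuous_ptws_map {I : eqType} {X Y : topologicalType} (h : I -> X -> Y) :
  (forall i, continuous (h i)) ->
  continuous (fun f : {ptws I -> X} => (fun i => h i (f i)) : {ptws I -> Y}).
Proof.
move=> hc f; apply: cvg_prod_topology => [|i].
  exact: fmap_filter (@nbhs_filter {ptws I -> X} f).
exact: (cvg_comp _ _ (@proj_continuous I (fun=> X) i f) (hc i (f i))).
Qed.

Lemma discrete_continuous (X : discreteTopologicalType) (Y : topologicalType)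
    (h : X -> Y) : continuous h.
Proof.
by move=> x B /nbhs_singleton Bhx; apply: filterS (discrete_set1 x) => y ->.
Qed.

Lemma continuous_U_F F :
  continuous (U_F F : {ptws seq2N -> bool} -> {ptws seq2N -> bool}).
Proof.
pose h (s : seq2N) (b : bool) := (s == [::]) || b || `[< F (overline (unzip2 s)) >].
have hc (s : seq2N) : continuous (h s) by exact: discrete_continuous.
exact: (continuous_ptws_map _ hc).
Qed.

Definition indicators (F : set (seq nat)) : set {ptws nat -> bool} :=
  [set f | exists2 s, F s & f = (fun k => k \in s)].

Lemma closed_indicators_nested_union {F : set (seq nat)} {P : nat -> seq nat} :
  closed (indicators F) -> (forall n, F (P n)) ->
  (forall m n, (m <= n)%N -> {subset P m <= P n}) ->
  exists2 s, F s & forall n, {subset P n <= s}.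
Proof.
move=> clF FP incP.
pose f n : {ptws nat -> bool} := fun k => k \in P n.
pose g : {ptws nat -> bool} := fun k => `[< exists n, k \in P n >].
have [s Fs gs] : indicators F g.
  apply: (@closed_cvg _ _ \oo _ f _ clF).
    by apply: nearW => n; exists (P n).
  apply: cvg_prod_topology => k; apply: cvg_near_cst.
  have [[n0 kPn0]|kP] := pselect (exists n, k \in P n).
    rewrite /g asboolT; last by exists n0.
    by apply: filterS (nbhs_infty_ge n0) => n /= /incP; apply.
  rewrite /g asboolF //; apply: filterS (nbhs_infty_ge 0) => n _ /=.
  by apply/negbTE/negP => kPn; apply: kP; exists n.
exists s => // n k kPn; have -> : (k \in s) = g k by rewrite gs.
by apply/asboolP; exists n.
Qed.

Section Regular.

Variable F : set (seq nat).
Hypothesis regF : regular F.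

Lemma regular_sorted s : F s -> sorted ltn s.
Proof. by case: regF => + _; apply. Qed.

Lemma regular_overline_take v k : F (overline v) -> F (overline (take k v)).
Proof.
case: regF => _ [her _] Fv; apply: her Fv _.
by rewrite -take_overline; exact: take_subseq.
Qed.

Lemma closed_regular : closed (indicators F).
Proof.
case: regF => _ [_ [_ cpt]]; apply: compact_closed cpt.
by apply: hausdorff_product => _; exact: discrete_hausdorff.
Qed.

Lemma regular_overline_mkseq_notin x : exists n, ~ F (overline (mkseq x n)).
Proof.
apply/existsNP => Fx; pose P n := overline (mkseq x n).
have incP m n : (m <= n)%N -> {subset P m <= P n}.
  by move=> mn k; rewrite /P -(take_mkseq x mn) -take_overline => /mem_take.
have [s _ Ps] := closed_indicators_nested_union closed_regular Fx incP.
have uniqP : uniq (P (size s).+1).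
  exact: (sorted_uniq ltn_trans ltnn (regular_sorted _ (Fx _))).
have := uniq_leq_size uniqP (Ps _).
by rewrite size_overline size_mkseq ltnn.
Qed.

Lemma Tr_U_F T : Tr T -> Tr (U_F F T).
Proof.
move=> TT s t; rewrite /U_F => /orP[/orP[|Tst]|/asboolP Fst].
- by case: s.
- by rewrite (TT _ _ Tst) orbT.
apply/orP; right; apply/asboolP.
have -> : unzip2 s = take (size s) (unzip2 (s ++ t)).
  by rewrite /unzip2 -map_take take_size_cat.
exact: regular_overline_take.
Qed.

Lemma U_F_branch T sigma x : Tr T ->
  (forall l, U_F F T (branch sigma x l)) -> forall l, T (branch sigma x l).
Proof.
move=> TT Ux l; have [l0 Fl0] := regular_overline_mkseq_notin x.
have ll0 : (l <= (l + l0).+1)%N by rewrite leqW // leq_addr.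
rewrite -(take_branch _ _ ll0); apply: Tr_take TT _.
move: (Ux (l + l0).+1); rewrite /U_F branch_eq0 orFb => /orP[//|/asboolP Fm].
exfalso; apply: Fl0; move: Fm; rewrite unzip2_branch.
have l0m : (l0 <= (l + l0).+1)%N by rewrite leqW // leq_addl.
by rewrite -(take_mkseq x l0m); exact: regular_overline_take.
Qed.

Lemma C_U_F T : Tr T -> C (U_F F T) <-> C T.
Proof.
move=> TT; rewrite !CP; split=> -[_ CT].
  split=> // sigma; have [x Ux] := CT sigma.
  by exists x; exact: U_F_branch.
split=> [|sigma]; first exact: Tr_U_F.
have [x Tx] := CT sigma; exists x => l.
by rewrite /U_F Tx orbT.
Qed.

End Regular.

Theorem proposition4p7 (F : set (seq nat)) :
  regular F ->
  (forall T, Tr T -> Tr (U_F F T)) /\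
  {within (@Tr (bool * nat) : set {ptws seq2N -> bool}),
     continuous (U_F F : {ptws seq2N -> bool} -> {ptws seq2N -> bool})} /\
  (forall T, Tr T -> (C (U_F F T) <-> C T)).
Proof.
move=> regF; split; first exact: Tr_U_F.
split; first exact/continuous_subspaceT/continuous_U_F.
exact: C_U_F.
Qed.
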